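(* Let $\lambda$ be a positive integer, $k,\psi_0\in\mathbb{R}$, $F(\psi)=\frac{k}{\sin^2(\lambda\psi+\psi_0)}$ and $G(\psi)=\cos(\lambda\psi+\psi_0)$. Then for every $\nu\in\mathbb{N}$ the function $$\mathcal{X}_L^{\,\nu}\left(p_r+\frac{1}{\lambda r}\mathcal{X}_L\right)^\lambda G(\psi)$$ is a constant of motion of $H=\frac12p_r^2+\frac{1}{r^2}\left(\frac12p_\psi^2+F(\psi)\right)$.
   Context: Phase space coordinates are $(r,\psi,p_r,p_\psi)$ with $r>0$ and canonical Poisson bracket; dots denote derivatives in $\psi$. $L=\frac12p_\psi^2+F(\psi)$ and $\mathcal{X}_L=p_\psi\frac{\partial}{\partial\psi}-\dot F\frac{\partial}{\partial p_\psi}$ is its Hamiltonian vector field, viewed as a differential operator; $p_r$ and $\frac{1}{\lambda r}$ act by multiplication. A constant of motion is a function with vanishing Poisson bracket with $H$. *)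

From Stdlib Require Import Reals ClassicalEpsilon.
Open Scope R_scope.

(* The derivative of f at x: the l with derivable_pt_lim f x l if it exists
   (it is unique), and 0 otherwise. *)
Definition deriv (f : R -> R) (x : R) : R :=
  match excluded_middle_informative (exists l, derivable_pt_lim f x l) with
  | left H => proj1_sig (constructive_indefinite_description _ H)
  | right _ => 0
  end.

(* Phase-space functions of (r, psi, p_r, p_psi). *)
Definition PFun := R -> R -> R -> R -> R.

Definition d_r (f : PFun) : PFun :=
  fun r psi pr pp => deriv (fun x => f x psi pr pp) r.
Definition d_psi (f : PFun) : PFun :=
  fun r psi pr pp => deriv (fun x => f r x pr pp) psi.
Definition d_pr (f : PFun) : PFun :=
  fun r psi pr pp => deriv (fun x => f r psi x pp) pr.
Definition d_ppsi (f : PFun) : PFun :=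
  fun r psi pr pp => deriv (fun x => f r psi pr x) pp.

Definition poisson (f g : PFun) : PFun :=
  fun r psi pr pp =>
    d_r f r psi pr pp * d_pr g r psi pr pp - d_pr f r psi pr pp * d_r g r psi pr pp
  + d_psi f r psi pr pp * d_ppsi g r psi pr pp - d_ppsi f r psi pr pp * d_psi g r psi pr pp.

Definition XL (F : R -> R) (f : PFun) : PFun :=
  fun r psi pr pp => pp * d_psi f r psi pr pp - deriv F psi * d_ppsi f r psi pr pp.

Definition raiseOp (lam : nat) (F : R -> R) (f : PFun) : PFun :=
  fun r psi pr pp => pr * f r psi pr pp + / (INR lam * r) * XL F f r psi pr pp.

Definition Ham (F : R -> R) : PFun :=
  fun r psi pr pp => pr ^ 2 / 2 + / r ^ 2 * (pp ^ 2 / 2 + F psi).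

Definition constant_of_motion (F : R -> R) (f : PFun) (domain : R -> R -> Prop) : Prop :=
  forall r psi pr pp, domain r psi -> poisson f (Ham F) r psi pr pp = 0.

From Stdlib Require Import Reals Lra Lia ClassicalEpsilon.
Open Scope R_scope.

(* Write θ = λψ + ψ0 and L = p_ψ²/2 + F(ψ). Since X_L L = 0, X_L cos θ = -λ p_ψ sin θ and,
   for this particular F, X_L (X_L cos θ) = -2 λ² L cos θ. Hence every function obtained from
   G by the operators of the theorem has the form a cos θ + b X_L cos θ with a, b functions of
   (r, p_r, L) only, and X_L and p_r + X_L/(λ r) act on the pair (a, b) by explicit formulas.
   The bracket with H is again of this form. For the n-th raising iterate of G both of its
   coefficients carry the factor n - λ, so they vanish at n = λ, and this vanishing is
   preserved by X_L. *)

Lemma derivable_pt_lim_deriv f x l : derivable_pt_lim f x l -> deriv f x = l.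
Proof.
  intro H; unfold deriv.
  destruct (excluded_middle_informative _) as [Hex | Hnot].
  - destruct (constructive_indefinite_description _ Hex) as [l' Hl']; simpl.
    exact (uniqueness_limite f x l' l Hl' H).
  - exfalso; apply Hnot; exists l; exact H.
Qed.

Lemma deriv_locally_ext f g x a b : a < x < b ->
  (forall z, a < z < b -> f z = g z) -> deriv f x = deriv g x.
Proof.
  intros Hx Hfg; unfold deriv at 1.
  destruct (excluded_middle_informative _) as [Hex | Hnot].
  - destruct (constructive_indefinite_description _ Hex) as [l Hl]; simpl.
    symmetry; apply derivable_pt_lim_deriv.
    exact (derivable_pt_lim_locally_ext f g x a b l Hx Hfg Hl).
  - unfold deriv; destruct (excluded_middle_informative _) as [[l Hl] | _]; [|reflexivity].
    exfalso; apply Hnot; exists l.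
    apply (derivable_pt_lim_locally_ext g f x a b l Hx); [|exact Hl].
    intros z Hz; symmetry; auto.
Qed.

Lemma derivable_pt_lim_plus_eq f g x l1 l2 l :
  derivable_pt_lim f x l1 -> derivable_pt_lim g x l2 -> l = l1 + l2 ->
  derivable_pt_lim (fun y => f y + g y) x l.
Proof. intros Hf Hg ->; exact (derivable_pt_lim_plus f g x l1 l2 Hf Hg). Qed.

Lemma derivable_pt_lim_mult_eq f g x l1 l2 l :
  derivable_pt_lim f x l1 -> derivable_pt_lim g x l2 -> l = l1 * g x + f x * l2 ->
  derivable_pt_lim (fun y => f y * g y) x l.
Proof. intros Hf Hg ->; exact (derivable_pt_lim_mult f g x l1 l2 Hf Hg). Qed.

Lemma derivable_pt_lim_comp_eq f g x l1 l2 l :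
  derivable_pt_lim g x l1 -> derivable_pt_lim f (g x) l2 -> l = l2 * l1 ->
  derivable_pt_lim (fun y => f (g y)) x l.
Proof. intros Hg Hf ->; exact (derivable_pt_lim_comp g f x l1 l2 Hg Hf). Qed.

Lemma derivable_pt_lim_inv_eq f x l1 l :
  derivable_pt_lim f x l1 -> f x <> 0 -> l = - l1 / f x ^ 2 ->
  derivable_pt_lim (fun y => / f y) x l.
Proof.
  intros Hf Hfx ->.
  apply (derivable_pt_lim_ext (fun y => 1 / f y)); [intro y; unfold Rdiv; ring|].
  replace (- l1 / f x ^ 2) with ((0 * f x - l1 * 1) / (f x)²)
    by (unfold Rsqr; field; exact Hfx).
  exact (derivable_pt_lim_div (fun _ => 1) f x 0 l1 (derivable_pt_lim_const 1 x) Hf Hfx).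
Qed.

Lemma derivable_pt_lim_pow2_eq f x l1 l :
  derivable_pt_lim f x l1 -> l = 2 * f x * l1 ->
  derivable_pt_lim (fun y => f y ^ 2) x l.
Proof.
  intros Hf ->.
  apply (derivable_pt_lim_ext (fun y => f y * f y)); [intro y; ring|].
  eapply derivable_pt_lim_mult_eq; [exact Hf | exact Hf | ring].
Qed.

Lemma derivable_pt_lim_sin_eq f x l1 l :
  derivable_pt_lim f x l1 -> l = cos (f x) * l1 ->
  derivable_pt_lim (fun y => sin (f y)) x l.
Proof. intros Hf ->; exact (derivable_pt_lim_comp f sin x l1 _ Hf (derivable_pt_lim_sin _)). Qed.

Lemma derivable_pt_lim_cos_eq f x l1 l :
  derivable_pt_lim f x l1 -> l = - sin (f x) * l1 ->
  derivable_pt_lim (fun y => cos (f y)) x l.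
Proof.
  intros Hf ->; apply (derivable_pt_lim_comp_eq cos f x l1 (- sin (f x))); [exact Hf| |ring].
  apply derivable_pt_lim_cos.
Qed.
(* A function of (r, p_r, L), packaged with its three partial derivatives. *)
Record coef := Coef {
  coef_val : R -> R -> R -> R;
  coef_dr : R -> R -> R -> R;
  coef_dpr : R -> R -> R -> R;
  coef_dL : R -> R -> R -> R }.

Definition coef_derivable (c : coef) : Prop :=
  forall r pr l, 0 < r ->
    derivable_pt_lim (fun y => coef_val c y pr l) r (coef_dr c r pr l) /\
    derivable_pt_lim (fun y => coef_val c r y l) pr (coef_dpr c r pr l) /\
    derivable_pt_lim (fun y => coef_val c r pr y) l (coef_dL c r pr l).

Definition coef_const (c : R) : coef :=
  Coef (fun _ _ _ => c) (fun _ _ _ => 0) (fun _ _ _ => 0) (fun _ _ _ => 0).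
Definition coef_pr : coef :=
  Coef (fun _ pr _ => pr) (fun _ _ _ => 0) (fun _ _ _ => 1) (fun _ _ _ => 0).
Definition coef_L : coef :=
  Coef (fun _ _ l => l) (fun _ _ _ => 0) (fun _ _ _ => 0) (fun _ _ _ => 1).
Definition coef_inv_r : coef :=
  Coef (fun r _ _ => / r) (fun r _ _ => - / r ^ 2) (fun _ _ _ => 0) (fun _ _ _ => 0).

Definition coef_add (a b : coef) : coef :=
  Coef (fun r pr l => coef_val a r pr l + coef_val b r pr l)
       (fun r pr l => coef_dr a r pr l + coef_dr b r pr l)
       (fun r pr l => coef_dpr a r pr l + coef_dpr b r pr l)
       (fun r pr l => coef_dL a r pr l + coef_dL b r pr l).

Definition coef_mul (a b : coef) : coef :=
  Coef (fun r pr l => coef_val a r pr l * coef_val b r pr l)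
       (fun r pr l => coef_dr a r pr l * coef_val b r pr l + coef_val a r pr l * coef_dr b r pr l)
       (fun r pr l => coef_dpr a r pr l * coef_val b r pr l + coef_val a r pr l * coef_dpr b r pr l)
       (fun r pr l => coef_dL a r pr l * coef_val b r pr l + coef_val a r pr l * coef_dL b r pr l).

Lemma coef_const_derivable c : coef_derivable (coef_const c).
Proof. intros r pr l _; repeat split; apply derivable_pt_lim_const. Qed.

Lemma coef_pr_derivable : coef_derivable coef_pr.
Proof.
  intros r pr l _; repeat split; (apply derivable_pt_lim_const || apply derivable_pt_lim_id).
Qed.

Lemma coef_L_derivable : coef_derivable coef_L.
Proof.
  intros r pr l _; repeat split; (apply derivable_pt_lim_const || apply derivable_pt_lim_id).
Qed.

Lemma coef_inv_r_derivable : coef_derivable coef_inv_r.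
Proof.
  intros r pr l Hr; repeat split; try apply derivable_pt_lim_const.
  eapply derivable_pt_lim_inv_eq; [apply derivable_pt_lim_id | lra | simpl; field; lra].
Qed.

Lemma coef_add_derivable a b :
  coef_derivable a -> coef_derivable b -> coef_derivable (coef_add a b).
Proof.
  intros Ha Hb r pr l Hr.
  destruct (Ha r pr l Hr) as (Ha1 & Ha2 & Ha3), (Hb r pr l Hr) as (Hb1 & Hb2 & Hb3).
  repeat split; eapply derivable_pt_lim_plus_eq; eauto.
Qed.

Lemma coef_mul_derivable a b :
  coef_derivable a -> coef_derivable b -> coef_derivable (coef_mul a b).
Proof.
  intros Ha Hb r pr l Hr.
  destruct (Ha r pr l Hr) as (Ha1 & Ha2 & Ha3), (Hb r pr l Hr) as (Hb1 & Hb2 & Hb3).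
  repeat split; eapply derivable_pt_lim_mult_eq; eauto.
Qed.

Create HintDb coef.
#[local] Hint Resolve coef_const_derivable coef_pr_derivable coef_L_derivable
  coef_inv_r_derivable coef_add_derivable coef_mul_derivable : coef.

(* The pair (a, b) stands for a cos θ + b X_L cos θ; see [embed] below. *)
Definition cpair := (coef * coef)%type.

Definition cpair_derivable (x : cpair) : Prop :=
  coef_derivable (fst x) /\ coef_derivable (snd x).

Definition cos_cpair : cpair := (coef_const 1, coef_const 0).

Section CoefficientOperators.
Variable lam : R.

Definition XL_cpair (x : cpair) : cpair :=
  (coef_mul (coef_const (-2 * lam ^ 2)) (coef_mul coef_L (snd x)), fst x).

Definition raise_cpair (x : cpair) : cpair :=
  (coef_add (coef_mul coef_pr (fst x))
     (coef_mul (coef_const (-2 * lam)) (coef_mul coef_L (coef_mul coef_inv_r (snd x)))),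
   coef_add (coef_mul coef_pr (snd x))
     (coef_mul (coef_const (/ lam)) (coef_mul coef_inv_r (fst x)))).

Lemma XL_cpair_derivable x : cpair_derivable x -> cpair_derivable (XL_cpair x).
Proof. intros [Ha Hb]; split; simpl; auto with coef. Qed.

Lemma raise_cpair_derivable x : cpair_derivable x -> cpair_derivable (raise_cpair x).
Proof. intros [Ha Hb]; split; simpl; auto 10 with coef. Qed.

(* The coefficients of {a cos θ + b X_L cos θ, H} on cos θ and on X_L cos θ
   (see [poisson_embed_Ham]). *)
Definition bracketH_cos (x : cpair) (r pr l : R) : R :=
  pr * coef_dr (fst x) r pr l + 2 * l / r ^ 3 * coef_dpr (fst x) r pr l
  - 2 * lam ^ 2 * l * coef_val (snd x) r pr l / r ^ 2.

Definition bracketH_XLG (x : cpair) (r pr l : R) : R :=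
  pr * coef_dr (snd x) r pr l + 2 * l / r ^ 3 * coef_dpr (snd x) r pr l
  + coef_val (fst x) r pr l / r ^ 2.

Lemma bracketH_cos_XL x r pr l :
  bracketH_cos (XL_cpair x) r pr l = -2 * lam ^ 2 * l * bracketH_XLG x r pr l.
Proof. unfold bracketH_cos, bracketH_XLG; simpl; unfold Rdiv; ring. Qed.

Lemma bracketH_XLG_XL x r pr l :
  bracketH_XLG (XL_cpair x) r pr l = bracketH_cos x r pr l.
Proof. unfold bracketH_cos, bracketH_XLG, Rdiv; simpl; ring. Qed.

Lemma bracketH_cos_raise x r pr l : lam <> 0 -> r <> 0 ->
  bracketH_cos (raise_cpair x) r pr l =
  pr * bracketH_cos x r pr l - 2 * lam * l / r * bracketH_XLG x r pr l
  + 2 * lam * l * coef_val (snd (raise_cpair x)) r pr l / r ^ 2.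
Proof. intros Hlam Hr; unfold bracketH_cos, bracketH_XLG; simpl; field; auto. Qed.

Lemma bracketH_XLG_raise x r pr l : lam <> 0 -> r <> 0 ->
  bracketH_XLG (raise_cpair x) r pr l =
  pr * bracketH_XLG x r pr l + bracketH_cos x r pr l / (lam * r)
  - coef_val (fst (raise_cpair x)) r pr l / (lam * r ^ 2).
Proof. intros Hlam Hr; unfold bracketH_cos, bracketH_XLG; simpl; field; auto. Qed.

(* By the two identities above, each raising step shifts the factor n - λ by one. *)
Lemma bracketH_raise_iter n r pr l : lam <> 0 -> r <> 0 ->
  let x := Nat.iter n raise_cpair cos_cpair in
  bracketH_cos x r pr l = (INR n - lam) / r ^ 2 * (2 * lam * l * coef_val (snd x) r pr l) /\
  bracketH_XLG x r pr l = (INR n - lam) / r ^ 2 * (- coef_val (fst x) r pr l / lam).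
Proof.
  intros Hlam Hr; cbv zeta; induction n as [|n [IHcos IHXLG]].
  - unfold bracketH_cos, bracketH_XLG; simpl; split; field; auto.
  - change (Nat.iter (S n) raise_cpair cos_cpair)
      with (raise_cpair (Nat.iter n raise_cpair cos_cpair)).
    rewrite bracketH_cos_raise, bracketH_XLG_raise, IHcos, IHXLG, S_INR by auto.
    simpl; split; field; auto.
Qed.

Lemma bracketH_XL_iter_zero m x r pr l :
  bracketH_cos x r pr l = 0 -> bracketH_XLG x r pr l = 0 ->
  bracketH_cos (Nat.iter m XL_cpair x) r pr l = 0 /\
  bracketH_XLG (Nat.iter m XL_cpair x) r pr l = 0.
Proof.
  intros Hcos HXLG; induction m as [|m [IHcos IHXLG]]; simpl; [auto|].
  rewrite bracketH_cos_XL, bracketH_XLG_XL, IHXLG, IHcos; split; ring.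
Qed.

End CoefficientOperators.

Lemma d_r_Ham F r psi pr pp : r <> 0 ->
  d_r (Ham F) r psi pr pp = -2 * (pp ^ 2 / 2 + F psi) / r ^ 3.
Proof.
  intro Hr; unfold d_r, Ham; apply derivable_pt_lim_deriv.
  eapply derivable_pt_lim_plus_eq with (f := fun _ => pr ^ 2 / 2);
    [apply derivable_pt_lim_const | | ].
  - eapply derivable_pt_lim_mult_eq with (g := fun _ => pp ^ 2 / 2 + F psi);
      [ | apply derivable_pt_lim_const | reflexivity].
    eapply derivable_pt_lim_inv_eq;
      [eapply derivable_pt_lim_pow2_eq; [apply derivable_pt_lim_id | reflexivity]
      | apply pow_nonzero; exact Hr | reflexivity].
  - field; exact Hr.
Qed.

Lemma d_pr_Ham F r psi pr pp : d_pr (Ham F) r psi pr pp = pr.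
Proof.
  unfold d_pr, Ham; apply derivable_pt_lim_deriv.
  eapply derivable_pt_lim_plus_eq with (g := fun _ => / r ^ 2 * (pp ^ 2 / 2 + F psi));
    [ | apply derivable_pt_lim_const | ].
  - apply derivable_pt_lim_div_scal with (f := fun y => y ^ 2).
    eapply derivable_pt_lim_pow2_eq; [apply derivable_pt_lim_id | reflexivity].
  - field.
Qed.

Lemma d_ppsi_Ham F r psi pr pp : r <> 0 -> d_ppsi (Ham F) r psi pr pp = pp / r ^ 2.
Proof.
  intro Hr; unfold d_ppsi, Ham; apply derivable_pt_lim_deriv.
  eapply derivable_pt_lim_plus_eq with (f := fun _ => pr ^ 2 / 2);
    [apply derivable_pt_lim_const | | ].
  - eapply derivable_pt_lim_mult_eq with (f := fun _ => / r ^ 2);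
      [apply derivable_pt_lim_const | | reflexivity].
    eapply derivable_pt_lim_plus_eq with (g := fun _ => F psi);
      [ | apply derivable_pt_lim_const | reflexivity].
    apply derivable_pt_lim_div_scal with (f := fun y => y ^ 2).
    eapply derivable_pt_lim_pow2_eq; [apply derivable_pt_lim_id | reflexivity].
  - field; exact Hr.
Qed.

Lemma d_psi_Ham F dF r psi pr pp : derivable_pt_lim F psi dF ->
  d_psi (Ham F) r psi pr pp = dF / r ^ 2.
Proof.
  intro HF; unfold d_psi, Ham; apply derivable_pt_lim_deriv.
  eapply derivable_pt_lim_plus_eq with (f := fun _ => pr ^ 2 / 2);
    [apply derivable_pt_lim_const | | ].
  - eapply derivable_pt_lim_mult_eq with (f := fun _ => / r ^ 2);
      [apply derivable_pt_lim_const | | reflexivity].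
    eapply derivable_pt_lim_plus_eq with (f := fun _ => pp ^ 2 / 2);
      [apply derivable_pt_lim_const | exact HF | reflexivity].
  - unfold Rdiv; ring.
Qed.

Section PhaseSpace.
Variables (lam : nat) (k psi0 : R).

Definition theta (psi : R) : R := INR lam * psi + psi0.
Definition Fpot (psi : R) : R := k / sin (theta psi) ^ 2.
Definition dFpot (psi : R) : R :=
  -2 * k * INR lam * cos (theta psi) / sin (theta psi) ^ 3.
Definition Lag (psi pp : R) : R := pp ^ 2 / 2 + Fpot psi.
Definition XLG (psi pp : R) : R := - INR lam * pp * sin (theta psi).

Definition embed_fun (a b : R -> R -> R -> R) : PFun := fun r psi pr pp =>
  a r pr (Lag psi pp) * cos (theta psi) + b r pr (Lag psi pp) * XLG psi pp.
Definition embed (x : cpair) : PFun := embed_fun (coef_val (fst x)) (coef_val (snd x)).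

Definition phase_dom (r psi : R) : Prop := 0 < r /\ sin (theta psi) <> 0.
Definition agree (f g : PFun) : Prop :=
  forall r psi pr pp, phase_dom r psi -> f r psi pr pp = g r psi pr pp.

Lemma derivable_pt_lim_theta psi : derivable_pt_lim theta psi (INR lam).
Proof.
  unfold theta; eapply derivable_pt_lim_plus_eq with (g := fun _ => psi0) (l1 := INR lam);
    [ | apply derivable_pt_lim_const | ring].
  eapply derivable_pt_lim_mult_eq with (f := fun _ => INR lam);
    [apply derivable_pt_lim_const | apply derivable_pt_lim_id | ring].
Qed.

Lemma derivable_pt_lim_Fpot psi : sin (theta psi) <> 0 ->
  derivable_pt_lim Fpot psi (dFpot psi).
Proof.
  intro Hs; unfold Fpot, Rdiv.
  eapply derivable_pt_lim_mult_eq with (f := fun _ => k); [apply derivable_pt_lim_const | | ].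
  - eapply derivable_pt_lim_inv_eq;
      [eapply derivable_pt_lim_pow2_eq;
         [eapply derivable_pt_lim_sin_eq; [apply derivable_pt_lim_theta | reflexivity]
         | reflexivity]
      | apply pow_nonzero; exact Hs | reflexivity].
  - unfold dFpot; field; exact Hs.
Qed.

Lemma derivable_pt_lim_Lag_psi psi pp : sin (theta psi) <> 0 ->
  derivable_pt_lim (fun y => Lag y pp) psi (dFpot psi).
Proof.
  intro Hs; unfold Lag.
  eapply derivable_pt_lim_plus_eq with (f := fun _ => pp ^ 2 / 2);
    [apply derivable_pt_lim_const | apply derivable_pt_lim_Fpot, Hs | ring].
Qed.

Lemma derivable_pt_lim_Lag_pp psi pp : derivable_pt_lim (fun y => Lag psi y) pp pp.
Proof.
  unfold Lag; eapply derivable_pt_lim_plus_eq with (g := fun _ => Fpot psi) (l1 := pp);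
    [ | apply derivable_pt_lim_const | ring].
  replace pp with (2 * pp * 1 / 2) at 2 by field.
  apply derivable_pt_lim_div_scal with (f := fun y => y ^ 2).
  eapply derivable_pt_lim_pow2_eq; [apply derivable_pt_lim_id | reflexivity].
Qed.

Lemma sin_theta_locally_neq0 psi : sin (theta psi) <> 0 ->
  exists a b, a < psi < b /\ forall z, a < z < b -> sin (theta z) <> 0.
Proof.
  intro Hs.
  assert (Hd : derivable_pt_lim (fun y => sin (theta y)) psi (cos (theta psi) * INR lam))
    by (eapply derivable_pt_lim_sin_eq; [apply derivable_pt_lim_theta | reflexivity]).
  destruct (continuous_neq_0 _ _ (derivable_continuous_pt _ _ (exist _ _ Hd)) Hs) as [e He].
  exists (psi - e), (psi + e); split; [destruct e; simpl; lra|].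
  intros z Hz; replace z with (psi + (z - psi)) by ring; apply He.
  apply Rabs_def1; lra.
Qed.

Lemma agree_partials f g r psi pr pp : agree f g -> phase_dom r psi ->
  d_r f r psi pr pp = d_r g r psi pr pp /\ d_pr f r psi pr pp = d_pr g r psi pr pp /\
  d_psi f r psi pr pp = d_psi g r psi pr pp /\ d_ppsi f r psi pr pp = d_ppsi g r psi pr pp.
Proof.
  intros Hfg [Hr Hs]; unfold d_r, d_pr, d_psi, d_ppsi.
  destruct (sin_theta_locally_neq0 psi Hs) as (a & b & Hab & Hsin).
  repeat split.
  - apply deriv_locally_ext with 0 (r + 1); [lra|].
    intros z Hz; apply Hfg; split; [lra | exact Hs].
  - apply deriv_locally_ext with (pr - 1) (pr + 1); [lra|].
    intros z _; apply Hfg; split; assumption.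
  - apply deriv_locally_ext with a b; [exact Hab|].
    intros z Hz; apply Hfg; split; auto.
  - apply deriv_locally_ext with (pp - 1) (pp + 1); [lra|].
    intros z _; apply Hfg; split; assumption.
Qed.

Lemma agree_XL f g : agree f g -> agree (XL Fpot f) (XL Fpot g).
Proof.
  intros Hfg r psi pr pp D; unfold XL.
  destruct (agree_partials f g r psi pr pp Hfg D) as (_ & _ & -> & ->); reflexivity.
Qed.

Lemma agree_raiseOp f g : agree f g -> agree (raiseOp lam Fpot f) (raiseOp lam Fpot g).
Proof.
  intros Hfg r psi pr pp D; unfold raiseOp.
  rewrite (Hfg r psi pr pp D), (agree_XL f g Hfg r psi pr pp D); reflexivity.
Qed.

Lemma agree_poisson f g h r psi pr pp : agree f g -> phase_dom r psi ->
  poisson f h r psi pr pp = poisson g h r psi pr pp.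
Proof.
  intros Hfg D; unfold poisson.
  destruct (agree_partials f g r psi pr pp Hfg D) as (-> & -> & -> & ->); reflexivity.
Qed.

Lemma d_r_embed x r psi pr pp : cpair_derivable x -> 0 < r ->
  d_r (embed x) r psi pr pp = embed_fun (coef_dr (fst x)) (coef_dr (snd x)) r psi pr pp.
Proof.
  intros [Ha Hb] Hr; unfold d_r, embed, embed_fun; apply derivable_pt_lim_deriv.
  destruct (Ha r pr (Lag psi pp) Hr) as (Ha' & _ & _), (Hb r pr (Lag psi pp) Hr) as (Hb' & _ & _).
  eapply derivable_pt_lim_plus_eq;
    [ eapply derivable_pt_lim_mult_eq; [exact Ha' | apply derivable_pt_lim_const | reflexivity]
    | eapply derivable_pt_lim_mult_eq; [exact Hb' | apply derivable_pt_lim_const | reflexivity]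
    | ring ].
Qed.

Lemma d_pr_embed x r psi pr pp : cpair_derivable x -> 0 < r ->
  d_pr (embed x) r psi pr pp = embed_fun (coef_dpr (fst x)) (coef_dpr (snd x)) r psi pr pp.
Proof.
  intros [Ha Hb] Hr; unfold d_pr, embed, embed_fun; apply derivable_pt_lim_deriv.
  destruct (Ha r pr (Lag psi pp) Hr) as (_ & Ha' & _), (Hb r pr (Lag psi pp) Hr) as (_ & Hb' & _).
  eapply derivable_pt_lim_plus_eq;
    [ eapply derivable_pt_lim_mult_eq; [exact Ha' | apply derivable_pt_lim_const | reflexivity]
    | eapply derivable_pt_lim_mult_eq; [exact Hb' | apply derivable_pt_lim_const | reflexivity]
    | ring ].
Qed.

Lemma d_ppsi_embed x r psi pr pp : cpair_derivable x -> 0 < r ->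
  let L := Lag psi pp in
  d_ppsi (embed x) r psi pr pp =
  coef_dL (fst x) r pr L * pp * cos (theta psi) + coef_dL (snd x) r pr L * pp * XLG psi pp
  + coef_val (snd x) r pr L * (- INR lam * sin (theta psi)).
Proof.
  intros [Ha Hb] Hr; cbv zeta; unfold d_ppsi, embed, embed_fun; apply derivable_pt_lim_deriv.
  destruct (Ha r pr (Lag psi pp) Hr) as (_ & _ & Ha'), (Hb r pr (Lag psi pp) Hr) as (_ & _ & Hb').
  eapply derivable_pt_lim_plus_eq.
  - eapply derivable_pt_lim_mult_eq;
      [ eapply derivable_pt_lim_comp_eq; [apply derivable_pt_lim_Lag_pp | exact Ha' | reflexivity]
      | apply derivable_pt_lim_const | reflexivity ].
  - eapply derivable_pt_lim_mult_eq;
      [ eapply derivable_pt_lim_comp_eq; [apply derivable_pt_lim_Lag_pp | exact Hb' | reflexivity]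
      | | reflexivity ].
    unfold XLG; eapply derivable_pt_lim_mult_eq with (g := fun _ => sin (theta psi));
      [ | apply derivable_pt_lim_const | reflexivity].
    eapply derivable_pt_lim_mult_eq with (f := fun _ => - INR lam);
      [apply derivable_pt_lim_const | apply derivable_pt_lim_id | reflexivity].
  - unfold XLG; ring.
Qed.

Lemma d_psi_embed x r psi pr pp : cpair_derivable x -> 0 < r -> sin (theta psi) <> 0 ->
  let L := Lag psi pp in
  d_psi (embed x) r psi pr pp =
  coef_dL (fst x) r pr L * dFpot psi * cos (theta psi)
  + coef_val (fst x) r pr L * (- sin (theta psi) * INR lam)
  + coef_dL (snd x) r pr L * dFpot psi * XLG psi pp
  + coef_val (snd x) r pr L * (- INR lam * pp * (cos (theta psi) * INR lam)).
Proof.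
  intros [Ha Hb] Hr Hs; cbv zeta; unfold d_psi, embed, embed_fun; apply derivable_pt_lim_deriv.
  destruct (Ha r pr (Lag psi pp) Hr) as (_ & _ & Ha'), (Hb r pr (Lag psi pp) Hr) as (_ & _ & Hb').
  eapply derivable_pt_lim_plus_eq.
  - eapply derivable_pt_lim_mult_eq;
      [ eapply derivable_pt_lim_comp_eq; [apply derivable_pt_lim_Lag_psi, Hs | exact Ha' | reflexivity]
      | eapply derivable_pt_lim_cos_eq; [apply derivable_pt_lim_theta | reflexivity]
      | reflexivity ].
  - eapply derivable_pt_lim_mult_eq;
      [ eapply derivable_pt_lim_comp_eq; [apply derivable_pt_lim_Lag_psi, Hs | exact Hb' | reflexivity]
      | | reflexivity ].
    unfold XLG; eapply derivable_pt_lim_mult_eq with (f := fun _ => - INR lam * pp);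
      [apply derivable_pt_lim_const | | reflexivity].
    eapply derivable_pt_lim_sin_eq; [apply derivable_pt_lim_theta | reflexivity].
  - unfold XLG; ring.
Qed.

(* The choice F = k / sin² θ is exactly what makes X_L (X_L cos θ) = -2 λ² L cos θ. *)
Lemma XL_embed x : cpair_derivable x ->
  agree (XL Fpot (embed x)) (embed (XL_cpair (INR lam) x)).
Proof.
  intros Hx r psi pr pp [Hr Hs]; unfold XL.
  rewrite d_psi_embed, d_ppsi_embed, (derivable_pt_lim_deriv _ _ _ (derivable_pt_lim_Fpot psi Hs))
    by assumption.
  unfold embed, embed_fun; simpl.
  assert (HL : Lag psi pp = pp ^ 2 / 2 + k / sin (theta psi) ^ 2) by reflexivity.
  set (L := Lag psi pp) in *.
  set (a := coef_val (fst x) r pr L); set (b := coef_val (snd x) r pr L).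
  set (aL := coef_dL (fst x) r pr L); set (bL := coef_dL (snd x) r pr L).
  clearbody a b aL bL L; subst L.
  unfold dFpot, XLG; field; exact Hs.
Qed.

Lemma raiseOp_embed (Hlam : INR lam <> 0) x : cpair_derivable x ->
  agree (raiseOp lam Fpot (embed x)) (embed (raise_cpair (INR lam) x)).
Proof.
  intros Hx r psi pr pp D; pose proof D as [Hr _]; unfold raiseOp.
  rewrite (XL_embed x Hx r psi pr pp D).
  unfold embed, embed_fun; simpl.
  set (L := Lag psi pp); set (a := coef_val (fst x) r pr L); set (b := coef_val (snd x) r pr L).
  clearbody a b L.
  field; split; lra.
Qed.

Lemma poisson_embed_Ham x r psi pr pp : cpair_derivable x -> phase_dom r psi ->
  poisson (embed x) (Ham Fpot) r psi pr pp =
  cos (theta psi) * bracketH_cos (INR lam) x r pr (Lag psi pp)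
  + XLG psi pp * bracketH_XLG x r pr (Lag psi pp).
Proof.
  intros Hx [Hr Hs]; unfold poisson.
  rewrite d_r_embed, d_pr_embed, d_psi_embed, d_ppsi_embed, d_r_Ham, d_pr_Ham, d_ppsi_Ham,
    (d_psi_Ham _ (dFpot psi)) by first [apply derivable_pt_lim_Fpot, Hs | lra | assumption].
  fold (Lag psi pp); unfold embed_fun, bracketH_cos, bracketH_XLG.
  assert (HL : Lag psi pp = pp ^ 2 / 2 + k / sin (theta psi) ^ 2) by reflexivity.
  set (L := Lag psi pp) in *.
  set (a := coef_val (fst x) r pr L); set (b := coef_val (snd x) r pr L).
  set (aL := coef_dL (fst x) r pr L); set (bL := coef_dL (snd x) r pr L).
  set (ar := coef_dr (fst x) r pr L); set (br := coef_dr (snd x) r pr L).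
  set (ap := coef_dpr (fst x) r pr L); set (bp := coef_dpr (snd x) r pr L).
  clearbody a b aL bL ar br ap bp L; subst L.
  unfold dFpot, XLG; field; split; [lra | exact Hs].
Qed.

Lemma agree_embed_iter (opf : PFun -> PFun) (opc : cpair -> cpair) :
  (forall f g, agree f g -> agree (opf f) (opf g)) ->
  (forall x, cpair_derivable x -> agree (opf (embed x)) (embed (opc x))) ->
  (forall x, cpair_derivable x -> cpair_derivable (opc x)) ->
  forall n f x, agree f (embed x) -> cpair_derivable x ->
  agree (Nat.iter n opf f) (embed (Nat.iter n opc x)) /\ cpair_derivable (Nat.iter n opc x).
Proof.
  intros Hcompat Hcomm Hderiv n f x Hfx Hx.
  induction n as [|n [IHagree IHx]]; simpl; [auto|]; split; [|auto].
  intros r psi pr pp D.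
  rewrite (Hcompat _ _ IHagree r psi pr pp D); exact (Hcomm _ IHx r psi pr pp D).
Qed.

End PhaseSpace.

Theorem mainTheorem4 (lam : nat) (Hlam : (0 < lam)%nat) (k psi0 : R) (nu : nat) :
  let F := fun psi => k / (sin (INR lam * psi + psi0)) ^ 2 in
  let G : PFun := fun _ psi _ _ => cos (INR lam * psi + psi0) in
  constant_of_motion F
    (Nat.iter nu (XL F) (Nat.iter lam (raiseOp lam F) G))
    (fun r psi => 0 < r /\ sin (INR lam * psi + psi0) <> 0).
Proof.
  intros F G r psi pr pp Hdom.
  change F with (Fpot lam k psi0) in *; change Hdom with (phase_dom lam psi0 r psi) in Hdom.
  assert (HlamR : INR lam <> 0) by (apply not_0_INR; lia).
  set (y := Nat.iter lam (raise_cpair (INR lam)) cos_cpair).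
  assert (HG : agree lam psi0 G (embed lam k psi0 cos_cpair)).
  { intros r' psi' pr' pp' _; unfold G, embed, embed_fun, theta; simpl; ring. }
  assert (Hcos : cpair_derivable cos_cpair) by (split; apply coef_const_derivable).
  destruct (agree_embed_iter lam k psi0 _ _ (agree_raiseOp lam k psi0)
              (raiseOp_embed lam k psi0 HlamR) (raise_cpair_derivable (INR lam))
              lam G cos_cpair HG Hcos) as [Hy Hyd].
  destruct (agree_embed_iter lam k psi0 _ _ (agree_XL lam k psi0) (XL_embed lam k psi0)
              (XL_cpair_derivable (INR lam)) nu _ y Hy Hyd) as [Hx Hxd].
  rewrite (agree_poisson lam psi0 _ _ _ r psi pr pp Hx Hdom), poisson_embed_Ham by assumption.
  assert (Hr : r <> 0) by (destruct Hdom; lra).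
  assert (Hy0 : bracketH_cos (INR lam) y r pr (Lag lam k psi0 psi pp) = 0 /\
                bracketH_XLG y r pr (Lag lam k psi0 psi pp) = 0).
  { unfold y; destruct (bracketH_raise_iter (INR lam) lam r pr (Lag lam k psi0 psi pp) HlamR Hr)
      as [-> ->].
    rewrite Rminus_diag; unfold Rdiv; split; ring. }
  destruct Hy0 as [Hycos HyXLG].
  destruct (bracketH_XL_iter_zero (INR lam) nu y r pr _ Hycos HyXLG) as [-> ->]; ring.
Qed.
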